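(* Let $P$ be a finite $(3+1)$-free poset, $\lambda$ a partition, and $(r,c)$, $(r+d+1,c+d)$ boxes of the Young diagram of $\lambda$ with $d\ge0$. Then for every $P$-tableau $T$ of shape $\lambda$, $T(r,c)<_PT(r+d+1,c+d)$.
   Context: $a<_Pb$: strict order. Young diagrams in English notation (row index increasing downward, column index increasing rightward). A $P$-tableau of shape $\lambda$ is a filling $T$ of the Young diagram by elements of $P$ with $T(1,c)<_PT(2,c)<_P\cdots$ down each column and $T(r,c+1)\not<_PT(r,c)$ along each row. *)

From mathcomp Require Import all_boot all_order.
Set Implicit Arguments. Unset Strict Implicit. Unset Printing Implicit Defensive.
Import Order.TTheory.
Local Open Scope order_scope.

Definition three_one_free (disp : Order.disp_t) (P : finPOrderType disp) : Prop :=
  ~ exists a b c x : P, [/\ a < b, b < c, x >< a, x >< b & x >< c].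

Definition is_partition (la : seq nat) : bool :=
  sorted geq la && all (fun k => 0 < k)%N la.

(* Box (r, c) (1-indexed: row r, column c, English notation) of the Young
   diagram of la. *)
Definition in_diagram (la : seq nat) (r c : nat) : bool :=
  [&& (0 < r)%N, (0 < c)%N & (c <= nth 0 la r.-1)%N].

(* A P-tableau of shape la: a filling T (only values on boxes matter) with
   strictly increasing columns and rows with no descent T(r,c+1) <_P T(r,c). *)
Definition P_tableau (disp : Order.disp_t) (P : finPOrderType disp)
    (la : seq nat) (T : nat -> nat -> P) : Prop :=
  (forall r c, in_diagram la r c -> in_diagram la r.+1 c -> T r c < T r.+1 c) /\
  (forall r c, in_diagram la r c -> in_diagram la r c.+1 -> ~~ (T r c.+1 < T r c)).

From mathcomp Require Import all_boot all_order.
Import Order.TTheory.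
Local Open Scope order_scope.

(* Induction on d.  For d = 0 the claim is strict increase down
   a column.  For the step, write x = T(r,c), a = T(r,c+1), and let
   u = T(i,j), b = T(i,j+1), v = T(i+1,j), z = T(i+1,j+1) with
   i = r+d+1, j = c+d.  The induction hypothesis (at columns c and c+1)
   gives x < u and a < b; columns give u < v and b < z; rows give
   a </ x, b </ u and z </ v.  If x were incomparable to all of the
   chain a < b < z we would have a (3+1); each comparability in turn forces
   x < z or contradicts one of the row conditions. *)

Lemma three_one_free_square {disp : Order.disp_t} {P : finPOrderType disp}
    (a b : P) {x z : P} (u v : P) :
  three_one_free P ->
  x < u -> u < v -> a < b -> b < z ->
  ~~ (a < x) -> ~~ (b < u) -> ~~ (z < v) -> x < z.
Proof.
move=> Hfree xu uv ab bz Nax Nbu Nzv.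
have az : a < z := lt_trans ab bz.
have xv : x < v := lt_trans xu uv.
have [|Ia] := boolP (x >=< a).
  case/orP=> [xa|]; first exact: le_lt_trans xa az.
  by rewrite le_eqVlt => /predU1P[<- //|ax]; rewrite ax in Nax.
have [|Ib] := boolP (x >=< b).
  case/orP=> [xb|bx]; first exact: le_lt_trans xb bz.
  by rewrite (le_lt_trans bx xu) in Nbu.
have [|Iz] := boolP (x >=< z).
  case/orP=> [|zx]; last by rewrite (le_lt_trans zx xv) in Nzv.
  by rewrite le_eqVlt => /predU1P[xz|//]; rewrite -xz xv in Nzv.
by exfalso; apply: Hfree; exists a, b, z, x.
Qed.

Lemma in_diagram_ideal {la : seq nat} {i j i' j' : nat} :
  is_partition la -> in_diagram la i j ->
  (0 < i')%N -> (i' <= i)%N -> (0 < j')%N -> (j' <= j)%N ->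
  in_diagram la i' j'.
Proof.
move=> /andP[la_sorted _] /and3P[i_gt0 j_gt0 j_le] i'_gt0 le_i' j'_gt0 le_j'.
apply/and3P; split=> //.
have row_i : (i.-1 < size la)%N.
  rewrite ltnNge; apply/negP=> Hsize.
  by move: j_le; rewrite nth_default // leqn0 => /eqP j0; rewrite j0 in j_gt0.
have le_pred : (i'.-1 <= i.-1)%N by rewrite -!subn1 leq_sub2r.
have geq_trans : transitive geq by move=> m n p /= nm pn; apply: leq_trans pn nm.
apply: (leq_trans le_j'); apply: (leq_trans j_le).
apply: (sorted_leq_nth geq_trans (fun n => leqnn n) 0 la_sorted) => //.
by rewrite inE (leq_ltn_trans le_pred).
Qed.

Section DiagonalIncrease.

Context {disp : Order.disp_t} {P : finPOrderType disp}.
Context {la : seq nat} {T : nat -> nat -> P}.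
Hypothesis la_partition : is_partition la.
Hypothesis T_tableau : P_tableau la T.

Lemma tableau_col_lt (i j : nat) :
  (0 < i)%N -> in_diagram la i.+1 j -> T i j < T i.+1 j.
Proof.
move=> i_gt0 Dlow; case: T_tableau => Hcol _; apply: (Hcol _ _ _ Dlow).
by apply: (in_diagram_ideal la_partition Dlow) => //; case/and3P: Dlow.
Qed.

Lemma tableau_row_nlt (i j : nat) :
  (0 < j)%N -> in_diagram la i j.+1 -> ~~ (T i j.+1 < T i j).
Proof.
move=> j_gt0 Dright; case: T_tableau => _ Hrow; apply: (Hrow _ _ _ Dright).
by apply: (in_diagram_ideal la_partition Dright) => //; case/and3P: Dright.
Qed.

Hypothesis P_free : three_one_free P.

Lemma tableau_diagonal_lt (r c d : nat) :
  in_diagram la r c -> in_diagram la (r + d + 1) (c + d) ->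
  T r c < T (r + d + 1) (c + d).
Proof.
move=> Drc; have r_gt0 : (0 < r)%N by case/and3P: Drc.
elim: d c Drc => [|d IH] c Drc Dend.
  by rewrite !addn0 addn1 in Dend *; apply: tableau_col_lt.
have c_gt0 : (0 < c)%N by case/and3P: Drc.
set i := (r + d + 1)%N; set j := (c + d)%N.
have Ei : (r + d.+1 + 1 = i.+1)%N by rewrite /i !addn1 addnS.
have Ej : (c + d.+1 = j.+1)%N by rewrite /j addnS.
rewrite Ei Ej in Dend *; clear Ei Ej.
have i_gt0 : (0 < i)%N by rewrite /i addn1.
have j_gt0 : (0 < j)%N by rewrite /j addn_gt0 c_gt0.
have r_le_i : (r <= i)%N by rewrite /i -addnA leq_addr.
have c_le_j : (c <= j)%N by rewrite /j leq_addr.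
(* All boxes used below lie weakly north-west of the corner (i+1, j+1). *)
have sub_end i' j' := in_diagram_ideal la_partition Dend (i' := i') (j' := j').
have Dij : in_diagram la i j by apply: sub_end; rewrite // ltnW.
have Dij1 : in_diagram la i j.+1 by apply: sub_end; rewrite // ltnW.
have Di1j : in_diagram la i.+1 j by apply: sub_end; rewrite // ltnW.
have Drc1 : in_diagram la r c.+1 by apply: sub_end; rewrite // ltnW.
apply: (three_one_free_square (T r c.+1) (T i j.+1) (T i j) (T i.+1 j) P_free).
- exact: IH.
- exact: tableau_col_lt.
- by have := IH c.+1 Drc1; rewrite addSn; apply.
- exact: tableau_col_lt.
- exact: tableau_row_nlt.
- exact: tableau_row_nlt.
- exact: tableau_row_nlt.
Qed.

End DiagonalIncrease.

Theorem mainTheorem20 (disp : Order.disp_t) (P : finPOrderType disp)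
    (la : seq nat) (r c d : nat) (T : nat -> nat -> P) :
  three_one_free P -> is_partition la ->
  in_diagram la r c -> in_diagram la (r + d + 1)%N (c + d)%N ->
  P_tableau la T ->
  T r c < T (r + d + 1)%N (c + d)%N.
Proof.
move=> P_free la_partition Drc Dend T_tableau.
exact: (tableau_diagonal_lt la_partition T_tableau P_free _ _ _ Drc Dend).
Qed.
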